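(* Let $S$ be an inverse semigroup that is a mirror semigroup, with semilattice of idempotents $\Sigma=\Sigma(S)$. Then $S$ is separately Scott-continuous if and only if $\Sigma$ is meet-continuous.
   Context: An inverse semigroup is a semigroup $S$ in which every $s$ has a unique $s^*$ with $ss^*s=s$ and $s^*ss^*=s^*$. $\Sigma(S)$ is the set of idempotents of $S$. The intrinsic order is $s\leqslant t$ iff $s=t\epsilon$ for some idempotent $\epsilon$. A subset of a poset is directed if it is nonempty and any two of its elements have an upper bound in it. $S$ is a mirror semigroup if every directed subset of $\Sigma$ having a supremum in $(\Sigma,\leqslant)$ also has a supremum in $(S,\leqslant)$. $\bigvee A$ denotes the supremum of $A$ in $S$. $S$ is separately Scott-continuous if for every directed subset $D\subseteq S$ that has a supremum and every $s\in S$, $\bigvee(Ds)$ exists and equals $(\bigvee D)s$. $\Sigma$ is meet-continuous if for every directed subset $\Delta\subseteq\Sigma$ having a supremum in $\Sigma$ and every $\epsilon\in\Sigma$, the supremum of $\Delta\epsilon$ in $\Sigma$ exists and equals $(\sup\Delta)\epsilon$ (i.e. the same property as separate Scott-continuity, for the semilattice $\Sigma$). *)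

Record InverseSemigroup := {
  carrier :> Type;
  mul : carrier -> carrier -> carrier;
  mul_assoc : forall a b c, mul a (mul b c) = mul (mul a b) c;
  inverse_unique : forall s, exists! t, mul (mul s t) s = s /\ mul (mul t s) t = t
}.

Section Defs.
Variable S : InverseSemigroup.

Definition idempotent (e : S) : Prop := mul S e e = e.

Definition ileq (s t : S) : Prop := exists e, idempotent e /\ s = mul S t e.

Definition upper_bound (A : S -> Prop) (x : S) : Prop :=
  forall a, A a -> ileq a x.

Definition is_sup_in (P : S -> Prop) (A : S -> Prop) (x : S) : Prop :=
  P x /\ upper_bound A x /\ (forall y, P y -> upper_bound A y -> ileq x y).

Definition is_sup (A : S -> Prop) (x : S) : Prop := is_sup_in (fun _ => True) A x.

Definition is_sup_Sigma (A : S -> Prop) (x : S) : Prop := is_sup_in idempotent A x.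

Definition directed (D : S -> Prop) : Prop :=
  (exists d, D d) /\
  (forall a b, D a -> D b -> exists c, D c /\ ileq a c /\ ileq b c).

Definition rmul_set (D : S -> Prop) (s : S) : S -> Prop :=
  fun y => exists d, D d /\ y = mul S d s.

Definition subset_Sigma (D : S -> Prop) : Prop := forall d, D d -> idempotent d.

Definition mirror_semigroup : Prop :=
  forall Delta : S -> Prop, subset_Sigma Delta -> directed Delta ->
    (exists x, is_sup_Sigma Delta x) -> exists y, is_sup Delta y.

Definition separately_Scott_continuous : Prop :=
  forall (D : S -> Prop) (x : S), directed D -> is_sup D x ->
    forall s, is_sup (rmul_set D s) (mul S x s).

Definition Sigma_meet_continuous : Prop :=
  forall (Delta : S -> Prop) (x : S), subset_Sigma Delta -> directed Delta ->
    is_sup_Sigma Delta x ->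
    forall e, idempotent e -> is_sup_Sigma (rmul_set Delta e) (mul S x e).

End Defs.

(* For a directed D with supremum x, the idempotents d⁻¹d (d in D) form a
   directed subset of Sigma with supremum x⁻¹x in Sigma, and, since d = x d⁻¹d,
   d⁻¹d (s s⁻¹) = x⁻¹ (d s) s⁻¹.  So if z bounds D s, then x⁻¹ z s⁻¹ bounds
   these products; meet-continuity together with the mirror property (which
   turns suprema in Sigma into suprema in S) gives x⁻¹x s s⁻¹ <= x⁻¹ z s⁻¹,
   and multiplying by x on the left and s on the right yields x s <= z.  The
   converse is immediate, again by the mirror property. *)

From Stdlib Require Import IndefiniteDescription.

Notation "a ⋅ b" := (mul _ a b) (at level 40, left associativity).

Ltac massoc := repeat rewrite <- mul_assoc; reflexivity.

Section InverseSemigroupTheory.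
Variable S : InverseSemigroup.
Implicit Types a b c d e f s t w x y z : S.

Definition inv s : S :=
  proj1_sig (constructive_definite_description _ (inverse_unique S s)).

Lemma inv_spec s : s ⋅ inv s ⋅ s = s /\ inv s ⋅ s ⋅ inv s = inv s.
Proof. exact (proj2_sig (constructive_definite_description _ (inverse_unique S s))). Qed.

Lemma mul_inv_mul s : s ⋅ inv s ⋅ s = s.
Proof. apply inv_spec. Qed.

Lemma inv_mul_inv s : inv s ⋅ s ⋅ inv s = inv s.
Proof. apply inv_spec. Qed.

Lemma inv_unique s t : s ⋅ t ⋅ s = s -> t ⋅ s ⋅ t = t -> t = inv s.
Proof.
  intros Hs Ht; destruct (inverse_unique S s) as [t0 [_ Hu]].
  rewrite <- (Hu t (conj Hs Ht)); apply Hu; split; [apply mul_inv_mul | apply inv_mul_inv].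
Qed.

Lemma idem_inv e : idempotent S e -> inv e = e.
Proof. intros He; symmetry; apply inv_unique; unfold idempotent in He; rewrite !He; auto. Qed.

Lemma idem_mul_inv s : idempotent S (s ⋅ inv s).
Proof. unfold idempotent; rewrite mul_assoc, mul_inv_mul; reflexivity. Qed.

Lemma idem_inv_mul s : idempotent S (inv s ⋅ s).
Proof. unfold idempotent; rewrite mul_assoc, inv_mul_inv; reflexivity. Qed.

(* With b := (e f)⁻¹, uniqueness of inverses forces f b e = b, which makes b
   idempotent; then e f = b⁻¹ = b. *)
Lemma idem_mul e f : idempotent S e -> idempotent S f -> idempotent S (e ⋅ f).
Proof.
  unfold idempotent; intros He Hf.
  set (b := inv (e ⋅ f)).
  assert (Hab : e ⋅ f ⋅ b ⋅ (e ⋅ f) = e ⋅ f) by apply mul_inv_mul.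
  assert (Hba : b ⋅ (e ⋅ f) ⋅ b = b) by apply inv_mul_inv.
  assert (Hfbe : f ⋅ b ⋅ e = b).
  { apply inv_unique.
    - transitivity (e ⋅ (f ⋅ f) ⋅ b ⋅ (e ⋅ e) ⋅ f); [massoc|].
      rewrite He, Hf; transitivity (e ⋅ f ⋅ b ⋅ (e ⋅ f)); [massoc | exact Hab].
    - transitivity (f ⋅ (b ⋅ (e ⋅ e) ⋅ (f ⋅ f) ⋅ b) ⋅ e); [massoc|].
      rewrite He, Hf; transitivity (f ⋅ (b ⋅ (e ⋅ f) ⋅ b) ⋅ e); [massoc|].
      rewrite Hba; reflexivity. }
  assert (Hbb : b ⋅ b = b).
  { rewrite <- Hfbe at 1 2.
    transitivity (f ⋅ (b ⋅ (e ⋅ f) ⋅ b) ⋅ e); [massoc|].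
    rewrite Hba; exact Hfbe. }
  assert (Hefb : e ⋅ f = b).
  { rewrite <- (idem_inv b Hbb); apply inv_unique; [apply inv_mul_inv | apply mul_inv_mul]. }
  rewrite Hefb; exact Hbb.
Qed.

(* e f is idempotent, hence its own inverse, and f e satisfies the inverse
   equations for e f. *)
Lemma idem_comm e f : idempotent S e -> idempotent S f -> e ⋅ f = f ⋅ e.
Proof.
  intros He Hf.
  rewrite <- (idem_inv (e ⋅ f) (idem_mul e f He Hf)); symmetry; apply inv_unique.
  - transitivity (e ⋅ (f ⋅ f) ⋅ (e ⋅ e) ⋅ f); [massoc|].
    rewrite He, Hf; transitivity (e ⋅ f ⋅ (e ⋅ f)); [massoc | exact (idem_mul e f He Hf)].
  - transitivity (f ⋅ (e ⋅ e) ⋅ (f ⋅ f) ⋅ e); [massoc|].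
    rewrite He, Hf; transitivity (f ⋅ e ⋅ (f ⋅ e)); [massoc | exact (idem_mul f e Hf He)].
Qed.

Lemma inv_mul s t : inv (s ⋅ t) = inv t ⋅ inv s.
Proof.
  symmetry; apply inv_unique.
  - transitivity (s ⋅ ((t ⋅ inv t) ⋅ (inv s ⋅ s)) ⋅ t); [massoc|].
    rewrite (idem_comm _ _ (idem_mul_inv t) (idem_inv_mul s)).
    transitivity ((s ⋅ inv s ⋅ s) ⋅ (t ⋅ inv t ⋅ t)); [massoc|].
    rewrite !mul_inv_mul; reflexivity.
  - transitivity (inv t ⋅ ((inv s ⋅ s) ⋅ (t ⋅ inv t)) ⋅ inv s); [massoc|].
    rewrite (idem_comm _ _ (idem_inv_mul s) (idem_mul_inv t)).
    transitivity ((inv t ⋅ t ⋅ inv t) ⋅ (inv s ⋅ s ⋅ inv s)); [massoc|].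
    rewrite !inv_mul_inv; reflexivity.
Qed.

Lemma ileq_trans a b c : ileq S a b -> ileq S b c -> ileq S a c.
Proof.
  intros [e [He ->]] [f [Hf ->]]; exists (f ⋅ e); split; [apply idem_mul; auto | massoc].
Qed.

Lemma ileq_idem_r e z : idempotent S e -> ileq S (z ⋅ e) z.
Proof. intros He; exists e; auto. Qed.

Lemma ileq_idem_l e z : idempotent S e -> ileq S (e ⋅ z) z.
Proof.
  intros He; exists (inv z ⋅ e ⋅ z); split.
  - unfold idempotent.
    transitivity (inv z ⋅ ((e ⋅ (z ⋅ inv z)) ⋅ e) ⋅ z); [massoc|].
    rewrite (idem_comm _ _ He (idem_mul_inv z)).
    transitivity (inv z ⋅ (z ⋅ inv z) ⋅ (e ⋅ e) ⋅ z); [massoc|].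
    rewrite He, mul_assoc, inv_mul_inv; reflexivity.
  - transitivity ((z ⋅ inv z) ⋅ e ⋅ z); [|massoc].
    rewrite (idem_comm _ _ (idem_mul_inv z) He).
    transitivity (e ⋅ (z ⋅ inv z ⋅ z)); [|massoc].
    rewrite mul_inv_mul; reflexivity.
Qed.

Lemma ileq_left a b : ileq S a b -> a = a ⋅ inv a ⋅ b.
Proof.
  intros [e [He ->]]; rewrite inv_mul, (idem_inv e He).
  transitivity (b ⋅ (e ⋅ e) ⋅ (inv b ⋅ b)); [|massoc].
  rewrite He, <- mul_assoc, (idem_comm _ _ He (idem_inv_mul b)).
  transitivity ((b ⋅ inv b ⋅ b) ⋅ e); [|massoc].
  rewrite mul_inv_mul; reflexivity.
Qed.

Lemma ileq_right a b : ileq S a b -> a = b ⋅ (inv a ⋅ a).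
Proof.
  intros [e [He ->]]; rewrite inv_mul, (idem_inv e He).
  transitivity (b ⋅ (e ⋅ (inv b ⋅ b)) ⋅ e); [|massoc].
  rewrite (idem_comm _ _ He (idem_inv_mul b)).
  transitivity ((b ⋅ inv b ⋅ b) ⋅ (e ⋅ e)); [|massoc].
  rewrite He, mul_inv_mul; reflexivity.
Qed.

Lemma ileq_mul_l a b c : ileq S a b -> ileq S (c ⋅ a) (c ⋅ b).
Proof. intros [e [He ->]]; exists e; split; [exact He | massoc]. Qed.

Lemma ileq_mul_r a b c : ileq S a b -> ileq S (a ⋅ c) (b ⋅ c).
Proof.
  intros H; rewrite (ileq_left a b H) at 1.
  rewrite <- !mul_assoc, mul_assoc; apply ileq_idem_l, idem_mul_inv.
Qed.

Lemma ileq_mul a b c d : ileq S a b -> ileq S c d -> ileq S (a ⋅ c) (b ⋅ d).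
Proof. intros H1 H2; apply (ileq_trans _ (b ⋅ c)); [apply ileq_mul_r | apply ileq_mul_l]; auto. Qed.

Lemma ileq_inv a b : ileq S a b -> ileq S (inv a) (inv b).
Proof. intros [e [He ->]]; rewrite inv_mul, (idem_inv e He); apply ileq_idem_l, He. Qed.

Lemma ileq_inv_mul a b : ileq S a b -> ileq S (inv a ⋅ a) (inv b ⋅ b).
Proof. intros H; apply ileq_mul; [apply ileq_inv|]; exact H. Qed.

Lemma idem_ileq a b : idempotent S b -> ileq S a b -> idempotent S a.
Proof. intros Hb [e [He ->]]; apply idem_mul; auto. Qed.

Lemma idem_ileq_mul e f : idempotent S f -> ileq S e f -> f ⋅ e = e.
Proof.
  intros Hf H; pose proof (idem_ileq e f Hf H) as He.
  rewrite (ileq_left e f H) at 2; rewrite (idem_inv e He), He.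
  apply idem_comm; auto.
Qed.

Lemma ileq_inv_mul_eq d x t : ileq S d x -> inv d ⋅ d ⋅ t = inv x ⋅ (d ⋅ t).
Proof.
  intros Hdx; rewrite (ileq_right d x Hdx) at 3.
  transitivity (inv x ⋅ x ⋅ (inv d ⋅ d) ⋅ t); [|massoc].
  rewrite (idem_ileq_mul (inv d ⋅ d) (inv x ⋅ x)); [reflexivity | apply idem_inv_mul |].
  apply ileq_inv_mul, Hdx.
Qed.

Lemma sup_idem D y : subset_Sigma S D -> is_sup S D y -> idempotent S y.
Proof.
  intros HD [_ [Hub Hleast]]; apply (idem_ileq _ (inv y ⋅ y)); [apply idem_inv_mul|].
  apply Hleast; [exact I|]; intros d Hd.
  assert (Hdd : inv d ⋅ d = d) by (rewrite (idem_inv d (HD d Hd)); exact (HD d Hd)).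
  rewrite <- Hdd; apply ileq_inv_mul, Hub, Hd.
Qed.

Definition image_set (g : S -> S) (D : S -> Prop) : S -> Prop :=
  fun y => exists d, D d /\ y = g d.

Lemma directed_image g D :
  (forall a b, ileq S a b -> ileq S (g a) (g b)) -> directed S D -> directed S (image_set g D).
Proof.
  intros Hg [[d0 Hd0] Hup]; split; [exists (g d0), d0; auto|].
  intros _ _ [a [Ha ->]] [b [Hb ->]].
  destruct (Hup a b Ha Hb) as [c [Hc [Hac Hbc]]].
  exists (g c); split; [exists c; auto | split; apply Hg; assumption].
Qed.

Lemma is_sup_Sigma_inv_mul D x :
  is_sup S D x -> is_sup_Sigma S (image_set (fun d => inv d ⋅ d) D) (inv x ⋅ x).
Proof.
  intros [_ [Hub Hleast]]; split; [apply idem_inv_mul | split].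
  - intros _ [d [Hd ->]]; apply ileq_inv_mul, Hub, Hd.
  - intros w Hw Hwub.
    assert (Hxw : ileq S x (x ⋅ w)).
    { apply Hleast; [exact I|]; intros d Hd.
      rewrite <- (mul_inv_mul d), <- mul_assoc.
      apply ileq_mul; [apply Hub, Hd | apply Hwub; exists d; auto]. }
    apply (ileq_trans _ _ _ (ileq_inv_mul _ _ Hxw)).
    rewrite inv_mul, (idem_inv w Hw).
    replace (w ⋅ inv x ⋅ (x ⋅ w)) with (w ⋅ (inv x ⋅ x) ⋅ w) by massoc.
    apply ileq_idem_l, idem_mul; [exact Hw | apply idem_inv_mul].
Qed.

Hypothesis mirror : mirror_semigroup S.

Lemma mirror_is_sup D x :
  subset_Sigma S D -> directed S D -> is_sup_Sigma S D x -> is_sup S D x.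
Proof.
  intros HD Hdir Hx.
  destruct (mirror D HD Hdir (ex_intro _ x Hx)) as [y Hy].
  destruct Hx as [_ [Hub Hleast]].
  split; [exact I | split; [exact Hub|]].
  intros z _ Hz; apply (ileq_trans _ y).
  - apply Hleast; [apply (sup_idem D y HD Hy) | apply Hy].
  - apply Hy; auto.
Qed.

Lemma Scott_continuous_meet_continuous :
  separately_Scott_continuous S -> Sigma_meet_continuous S.
Proof.
  intros SSC Delta x HD Hdir Hx e He.
  destruct (SSC Delta x Hdir (mirror_is_sup Delta x HD Hdir Hx) e) as [_ [Hub Hleast]].
  split; [apply idem_mul; [apply Hx | exact He] | split; [exact Hub|]].
  intros y _ Hy; apply Hleast; auto.
Qed.

Lemma meet_continuous_Scott_continuous :
  Sigma_meet_continuous S -> separately_Scott_continuous S.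
Proof.
  intros MC D x Hdir Hx s.
  pose proof Hx as [_ [Hub _]].
  split; [exact I | split].
  { intros _ [d [Hd ->]]; apply ileq_mul_r, Hub, Hd. }
  intros z _ Hz.
  set (Delta := image_set (fun d => inv d ⋅ d) D).
  set (e := s ⋅ inv s).
  assert (HDelta : subset_Sigma S Delta) by (intros _ [d [_ ->]]; apply idem_inv_mul).
  assert (HDelta_dir : directed S Delta).
  { apply directed_image; [apply ileq_inv_mul | exact Hdir]. }
  assert (HDelta_e : is_sup S (rmul_set S Delta e) (inv x ⋅ x ⋅ e)).
  { apply mirror_is_sup.
    - intros _ [f [Hf ->]]; apply idem_mul; [apply HDelta, Hf | apply idem_mul_inv].
    - apply (directed_image (fun f => f ⋅ e)); [intros a b; apply ileq_mul_r | exact HDelta_dir].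
    - apply MC; [exact HDelta | exact HDelta_dir | apply is_sup_Sigma_inv_mul, Hx | apply idem_mul_inv]. }
  assert (Hbound : ileq S (inv x ⋅ x ⋅ e) (inv x ⋅ z ⋅ inv s)).
  { apply HDelta_e; [exact I|]; intros y [f [[d [Hd ->]] ->]].
    unfold e; rewrite (ileq_inv_mul_eq d x _ (Hub d Hd)), (mul_assoc _ d), <- (mul_assoc _ (inv x) z).
    apply ileq_mul_l, ileq_mul_r, Hz; exists d; auto. }
  assert (Hxs : x ⋅ s = x ⋅ (inv x ⋅ x ⋅ e) ⋅ s).
  { unfold e; transitivity ((x ⋅ inv x ⋅ x) ⋅ (s ⋅ inv s ⋅ s)); [rewrite !mul_inv_mul; reflexivity | massoc]. }
  rewrite Hxs; apply (ileq_trans _ _ _ (ileq_mul_r _ _ s (ileq_mul_l _ _ x Hbound))).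
  replace (x ⋅ (inv x ⋅ z ⋅ inv s) ⋅ s) with (x ⋅ inv x ⋅ (z ⋅ (inv s ⋅ s))) by massoc.
  apply (ileq_trans _ (z ⋅ (inv s ⋅ s))); [apply ileq_idem_l, idem_mul_inv | apply ileq_idem_r, idem_inv_mul].
Qed.

End InverseSemigroupTheory.

Theorem proposition4p1 (S : InverseSemigroup) :
  mirror_semigroup S ->
  (separately_Scott_continuous S <-> Sigma_meet_continuous S).
Proof.
  intros M; split.
  - exact (Scott_continuous_meet_continuous S M).
  - exact (meet_continuous_Scott_continuous S M).
Qed.
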